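(* $E^{ce}_{\mathrm{perm}}$ and $E^{ce}_{\mathrm{set}}$ are computably bireducible: $E^{ce}_{\mathrm{perm}}\leq_cE^{ce}_{\mathrm{set}}$ and $E^{ce}_{\mathrm{set}}\leq_cE^{ce}_{\mathrm{perm}}$.
   Context: $W_e$ is the $e$-th c.e. set; $A^{[n]}=\{x:\langle x,n\rangle\in A\}$ is the $n$-th column of $A\subseteq\omega$ under the standard pairing function. $i\,E^{ce}_{\mathrm{perm}}\,j\iff$ there is a permutation $p$ of $\omega$ with $W_i^{[n]}=W_j^{[p(n)]}$ for all $n$. $i\,E^{ce}_{\mathrm{set}}\,j\iff\{W_i^{[n]}:n\in\omega\}=\{W_j^{[n]}:n\in\omega\}$. For equivalence relations $E,F$ on $\omega$, $E\leq_cF$ means there is a total computable $g$ with $x\,E\,y\iff g(x)\,F\,g(y)$ for all $x,y$. *)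

From Stdlib Require Import Arith Lia.

Definition pair (x y : nat) : nat := (x + y) * (x + y + 1) / 2 + y.

(* Programs: unary partial recursive functions (arguments coded by pairing). *)
Inductive code : Type :=
| CZero
| CSucc
| CId
| CPi1
| CPi2
| CPair (f g : code)
| CComp (f g : code)
| CRec (f g : code)
| CMu (f : code).

Inductive eval : code -> nat -> nat -> Prop :=
| ev_zero x : eval CZero x 0
| ev_succ x : eval CSucc x (S x)
| ev_id x : eval CId x x
| ev_pi1 x y : eval CPi1 (pair x y) x
| ev_pi2 x y : eval CPi2 (pair x y) y
| ev_pair f g x a b : eval f x a -> eval g x b -> eval (CPair f g) x (pair a b)
| ev_comp f g x a b : eval g x a -> eval f a b -> eval (CComp f g) x b
| ev_rec0 f g x r : eval f x r -> eval (CRec f g) (pair x 0) r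
| ev_recS f g x n r s :
    eval (CRec f g) (pair x n) r -> eval g (pair x (pair n r)) s ->
    eval (CRec f g) (pair x (S n)) s
| ev_mu f x n :
    eval f (pair x n) 0 ->
    (forall m, m < n -> exists k, k <> 0 /\ eval f (pair x m) k) ->
    eval (CMu f) x n.

(* Goedel numbering of programs (injective; numbers outside the range
   are indices of the empty partial function). *)
Fixpoint enc (c : code) : nat :=
  match c with
  | CZero => pair 0 0
  | CSucc => pair 1 0
  | CId => pair 2 0
  | CPi1 => pair 3 0
  | CPi2 => pair 4 0
  | CPair f g => pair 5 (pair (enc f) (enc g))
  | CComp f g => pair 6 (pair (enc f) (enc g))
  | CRec f g => pair 7 (pair (enc f) (enc g))
  | CMu f => pair 8 (enc f)
  end.

Definition W (e x : nat) : Prop := exists c y, enc c = e /\ eval c x y.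

Definition column (A : nat -> Prop) (n : nat) : nat -> Prop :=
  fun x => A (pair x n).

Definition set_eq (A B : nat -> Prop) : Prop := forall x, A x <-> B x.

Definition is_permutation (p : nat -> nat) : Prop :=
  (forall a b, p a = p b -> a = b) /\ (forall b, exists a, p a = b).

Definition Eperm (i j : nat) : Prop :=
  exists p, is_permutation p /\
    forall n, set_eq (column (W i) n) (column (W j) (p n)).

Definition Eset (i j : nat) : Prop :=
  (forall n, exists m, set_eq (column (W i) n) (column (W j) m)) /\
  (forall m, exists n, set_eq (column (W i) n) (column (W j) m)).

Definition computable (g : nat -> nat) : Prop :=
  exists c, forall x, eval c x (g x).

Definition creducible (E F : nat -> nat -> Prop) : Prop :=
  exists g, computable g /\ forall x y, E x y <-> F (g x) (g y).

From Stdlib Require Import Arith Bool Lia List Cantor Classical ClassicalEpsilon RelationClasses.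

(* Both reductions only rearrange columns, so they are given by composing the program
   with index i with a fixed total recursive map and restricting it to a decidable set.

   Set to perm: column <n, t> of W_(set_to_perm i) is W_i^[n]. Every set then occurs
   infinitely often among the columns, so equality of the sets of columns is equality
   of the multiplicities of all sets, which holds iff the families agree up to a
   permutation (match the r-th copy of a set on one side with its r-th copy on the
   other).

   Perm to set: column <k, <m, q>> of W_(perm_to_set i) lists, on the diagonal
   positions <s, s>, the columns W_i^[m_s] (s < k) of a finite sequence of indices,
   and at <s, u> with m_s <> m_u a copy of the column W_i^[q]. When W_i^[q] is
   nonempty, this column knows the sets W_i^[m_s] together with the fact that the
   m_s are pairwise distinct, so the set of all columns of W_(perm_to_set i)
   determines how many distinct columns of W_i equal any given set; equal
   multiplicities again yield a permutation. *)

Lemma pair_to_nat x y : pair x y = Cantor.to_nat (x, y).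
Proof. rewrite Cantor.to_nat_spec2. unfold pair. rewrite (Nat.add_comm y x), Nat.add_1_r. lia. Qed.

Definition unpair1 (z : nat) : nat := fst (Cantor.of_nat z).
Definition unpair2 (z : nat) : nat := snd (Cantor.of_nat z).

Lemma unpair1_pair x y : unpair1 (pair x y) = x.
Proof. unfold unpair1. now rewrite pair_to_nat, Cantor.cancel_of_to. Qed.

Lemma unpair2_pair x y : unpair2 (pair x y) = y.
Proof. unfold unpair2. now rewrite pair_to_nat, Cantor.cancel_of_to. Qed.

Lemma pair_unpair z : pair (unpair1 z) (unpair2 z) = z.
Proof.
  unfold unpair1, unpair2. now rewrite pair_to_nat, <- surjective_pairing, Cantor.cancel_to_of.
Qed.

Lemma pair_inj x y x' y' : pair x y = pair x' y' -> x = x' /\ y = y'.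
Proof. rewrite !pair_to_nat. now intros [= -> ->]%Cantor.to_nat_inj. Qed.

Lemma pair_surj z : exists x y, z = pair x y.
Proof. exists (unpair1 z), (unpair2 z). symmetry. apply pair_unpair. Qed.

Ltac unpair_simpl := cbv beta; repeat (rewrite unpair1_pair || rewrite unpair2_pair).

Ltac pair_inj_all :=
  repeat match goal with
  | H : pair _ _ = pair _ _ |- _ => apply pair_inj in H as [? ?]; subst
  | H : S _ = S _ |- _ => injection H as H; subst
  end.

Lemma enc_inj c d : enc c = enc d -> c = d.
Proof.
  revert d; induction c; intros []; simpl; intro E; pair_inj_all;
    try discriminate; f_equal; auto.
Qed.

Lemma eval_functional c : forall x y1 y2, eval c x y1 -> eval c x y2 -> y1 = y2.
Proof.
  induction c as [| | | | |f IHf g IHg|f IHf g IHg|f IHf g IHg|f IHf];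
    intros x y1 y2 H1 H2.
  8: {
    rewrite <- (pair_unpair x) in H1, H2. revert y1 y2 H1 H2.
    induction (unpair2 x) as [|n IHn]; intros y1 y2 H1 H2;
      inversion H1; inversion H2; pair_inj_all; try discriminate; eauto.
    match goal with
    | _ : eval _ (pair _ n) ?r1, _ : eval _ (pair _ n) ?r2 |- _ =>
        assert (r1 = r2) as <- by eauto
    end.
    eauto. }
  all: inversion H1; inversion H2; subst; pair_inj_all; auto.
  - f_equal; eauto.
  - match goal with
    | _ : eval g x ?a1, _ : eval g x ?a2 |- _ => assert (a1 = a2) as <- by eauto
    end.
    eauto.
  - match goal with
    | below1 : forall m, m < y1 -> _, below2 : forall m, m < y2 -> _ |- _ =>
        destruct (Nat.lt_trichotomy y1 y2) as [lt | [eq | gt]]; trivial; exfalso;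
        [destruct (below2 _ lt) as (k & k_nz & Hk) | destruct (below1 _ gt) as (k & k_nz & Hk)];
        eauto
    end.
Qed.

Definition computes (c : code) (F : nat -> nat) : Prop := forall x, eval c x (F x).

Lemma computes_ext c F G : computes c F -> (forall x, F x = G x) -> computes c G.
Proof. intros HF E x. rewrite <- E. apply HF. Qed.

Lemma computes_zero : computes CZero (fun _ => 0).
Proof. intro. constructor. Qed.

Lemma computes_succ : computes CSucc S.
Proof. intro. constructor. Qed.

Lemma computes_id : computes CId (fun x => x).
Proof. intro. constructor. Qed.

Lemma computes_pi1 : computes CPi1 unpair1.
Proof. intro z. rewrite <- (pair_unpair z) at 1. constructor. Qed.

Lemma computes_pi2 : computes CPi2 unpair2.
Proof. intro z. rewrite <- (pair_unpair z) at 1. constructor. Qed.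

Lemma computes_pair f g F G :
  computes f F -> computes g G -> computes (CPair f g) (fun x => pair (F x) (G x)).
Proof. intros HF HG x. constructor; auto. Qed.

Lemma computes_comp f g F G :
  computes f F -> computes g G -> computes (CComp f g) (fun x => F (G x)).
Proof. intros HF HG x. econstructor; eauto. Qed.

Lemma computes_rec f g F G R :
  computes f F -> computes g G ->
  (forall x, R (pair x 0) = F x) ->
  (forall x n, R (pair x (S n)) = G (pair x (pair n (R (pair x n))))) ->
  computes (CRec f g) R.
Proof.
  intros HF HG R0 RS z. rewrite <- (pair_unpair z).
  induction (unpair2 z) as [|n IHn].
  - rewrite R0. constructor. apply HF.
  - rewrite RS. econstructor; [exact IHn | apply HG].
Qed.

Fixpoint const_prog (n : nat) : code :=
  match n with 0 => CZero | S n => CComp CSucc (const_prog n) end.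

Lemma computes_const n : computes (const_prog n) (fun _ => n).
Proof. induction n; intro x; simpl; econstructor; eauto. constructor. Qed.

Ltac computes_basic :=
  repeat first
    [ apply computes_pair | apply computes_comp | apply computes_const | apply computes_id
    | apply computes_pi1 | apply computes_pi2 | apply computes_succ | apply computes_zero ].

Definition bin (o a b : code) : code := CComp o (CPair a b).

Lemma computes_bin o a b op A B :
  computes o (fun z => op (unpair1 z) (unpair2 z)) -> computes a A -> computes b B ->
  computes (bin o a b) (fun x => op (A x) (B x)).
Proof.
  intros Ho HA HB. eapply computes_ext.
  - apply computes_comp; [exact Ho | apply computes_pair; eassumption].
  - intro. now unpair_simpl.
Qed.

Definition add_prog : code := CRec CId (CComp CSucc (CComp CPi2 CPi2)).

Lemma computes_add_prog : computes add_prog (fun z => unpair1 z + unpair2 z).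
Proof.
  eapply computes_rec; [computes_basic .. | intro | intros]; unpair_simpl; lia.
Qed.

Definition pred_prog : code := CComp (CRec CZero (CComp CPi1 CPi2)) (CPair CZero CId).

Lemma computes_pred_prog : computes pred_prog pred.
Proof.
  eapply computes_ext.
  - apply computes_comp; [| computes_basic].
    apply computes_rec with (R := fun z => pred (unpair2 z)) (F := fun _ => 0)
                            (G := fun z => unpair1 (unpair2 z));
      [computes_basic .. | intro | intros]; now unpair_simpl.
  - intro. now unpair_simpl.
Qed.

Definition sub_prog : code := CRec CId (CComp pred_prog (CComp CPi2 CPi2)).

Lemma computes_sub_prog : computes sub_prog (fun z => unpair1 z - unpair2 z).
Proof.
  eapply computes_rec;
    [computes_basic | apply computes_comp; [apply computes_pred_prog | computes_basic]
    | intro | intros]; unpair_simpl; lia.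
Qed.

Definition ifz_prog : code := CRec CPi1 (CComp CPi2 CPi1).

Lemma computes_ifz_prog :
  computes ifz_prog (fun z => match unpair2 z with
                              | 0 => unpair1 (unpair1 z)
                              | S _ => unpair2 (unpair1 z) end).
Proof. eapply computes_rec; [computes_basic .. | intro | intros]; now unpair_simpl. Qed.

(* m = <m_0, <m_1, <m_2, ...>>> codes the sequence (m_t)_t. *)
Definition code_nth (m t : nat) : nat := unpair1 (Nat.iter t unpair2 m).

Definition code_nth_prog : code := CComp CPi1 (CRec CId (CComp CPi2 (CComp CPi2 CPi2))).

Lemma computes_code_nth_prog : computes code_nth_prog (fun z => code_nth (unpair1 z) (unpair2 z)).
Proof.
  apply computes_comp with (G := fun z => Nat.iter (unpair2 z) unpair2 (unpair1 z));
    [computes_basic |].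
  eapply computes_rec; [computes_basic .. | intro | intros]; now unpair_simpl.
Qed.

Lemma code_nth_exists k f : exists m, forall t, t < k -> code_nth m t = f t.
Proof.
  revert f; induction k as [|k IHk]; intro f; [exists 0; lia |].
  destruct (IHk (fun t => f (S t))) as [m Hm].
  exists (pair (f 0) m). intros [|t] lt; unfold code_nth; simpl.
  - apply unpair1_pair.
  - rewrite <- Nat.iter_swap, unpair2_pair. apply Hm. lia.
Qed.

Definition dist (a b : nat) : nat := (a - b) + (b - a).

Definition dist_prog (a b : code) : code := bin add_prog (bin sub_prog a b) (bin sub_prog b a).

Definition ifz (c a b : code) : code := CComp ifz_prog (CPair (CPair a b) c).

Lemma computes_add a b A B :
  computes a A -> computes b B -> computes (bin add_prog a b) (fun x => A x + B x).
Proof. apply computes_bin, computes_add_prog. Qed.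

Lemma computes_sub a b A B :
  computes a A -> computes b B -> computes (bin sub_prog a b) (fun x => A x - B x).
Proof. apply computes_bin, computes_sub_prog. Qed.

Lemma computes_dist a b A B :
  computes a A -> computes b B -> computes (dist_prog a b) (fun x => dist (A x) (B x)).
Proof. intros. apply computes_add; apply computes_sub; assumption. Qed.

Lemma computes_code_nth a b A B :
  computes a A -> computes b B -> computes (bin code_nth_prog a b) (fun x => code_nth (A x) (B x)).
Proof. apply computes_bin, computes_code_nth_prog. Qed.

Lemma computes_ifz c a b C A B :
  computes c C -> computes a A -> computes b B ->
  computes (ifz c a b) (fun x => match C x with 0 => A x | S _ => B x end).
Proof.
  intros. eapply computes_ext.
  - apply computes_comp; [apply computes_ifz_prog | computes_basic; eassumption].
  - intro. now unpair_simpl.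
Qed.

Ltac prove_computes :=
  repeat first
    [ apply computes_add | apply computes_sub | apply computes_dist | apply computes_code_nth
    | apply computes_ifz | apply computes_pair | apply computes_comp | apply computes_const
    | apply computes_id | apply computes_pi1 | apply computes_pi2 | apply computes_succ
    | apply computes_zero ].

Definition halts (c : code) (x : nat) : Prop := exists y, eval c x y.

Lemma halts_pair a b x : halts (CPair a b) x <-> halts a x /\ halts b x.
Proof.
  split.
  - intros [y Ev]. inversion Ev; subst. split; eexists; eauto.
  - intros [[ya Ea] [yb Eb]]. eexists. constructor; eauto.
Qed.

Lemma halts_comp c h H x : computes h H -> halts (CComp c h) x <-> halts c (H x).
Proof.
  intro HH. split.
  - intros [y Ev]. inversion Ev; subst.
    rewrite (eval_functional _ _ _ _ (HH x) ltac:(eassumption)). eexists; eauto.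
  - intros [y Ev]. eexists. econstructor; eauto.
Qed.

Lemma halts_mu_zero g G x : computes g G -> halts (CMu (CComp g CPi1)) x <-> G x = 0.
Proof.
  intro HG. pose proof (computes_comp _ _ _ _ HG computes_pi1) as HG1. split.
  - intros [n Ev]. inversion Ev; subst.
    specialize (HG1 (pair x n)). cbv beta in HG1. rewrite unpair1_pair in HG1.
    eapply eval_functional; eassumption.
  - intro G0. exists 0. constructor; [| intros; lia].
    specialize (HG1 (pair x 0)). cbv beta in HG1. now rewrite unpair1_pair, G0 in HG1.
Qed.

(* The index of the program x |-> <c (h x), mu n. g x = 0>, where enc c = i (if there
   is no such c, no program has this index, just as none has index i). Its second
   component is defined iff g x = 0. *)
Definition guarded_index (h g : code) (i : nat) : nat :=
  pair 5 (pair (pair 6 (pair i (enc h))) (enc (CMu (CComp g CPi1)))).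

Lemma enc_guarded_index c h g i : enc c = guarded_index h g i ->
  exists c', c = CPair (CComp c' h) (CMu (CComp g CPi1)) /\ enc c' = i.
Proof.
  unfold guarded_index.
  destruct c as [| | | | | [| | | | | | c' h' | |] mu | | |]; simpl; intro E;
    pair_inj_all; try discriminate.
  exists c'. split; [f_equal; [f_equal |]; now apply enc_inj | reflexivity].
Qed.

Lemma W_guarded_index h g H G i x : computes h H -> computes g G ->
  W (guarded_index h g i) x <-> G x = 0 /\ W i (H x).
Proof.
  intros HH HG.
  transitivity (exists c, enc c = i /\ halts (CPair (CComp c h) (CMu (CComp g CPi1))) x).
  - split.
    + intros (c & y & Ec & Ev). apply enc_guarded_index in Ec as (c' & -> & Ec').
      exists c'. split; [exact Ec' | exists y; exact Ev].
    + intros (c & <- & y & Ev). exists (CPair (CComp c h) (CMu (CComp g CPi1))), y. now split.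
  - setoid_rewrite halts_pair. setoid_rewrite (fun c => halts_comp c h H x HH).
    setoid_rewrite (halts_mu_zero _ _ _ HG). firstorder.
Qed.

Lemma guarded_index_computable h g : computable (guarded_index h g).
Proof.
  exists (CPair (const_prog 5) (CPair (CPair (const_prog 6) (CPair CId (const_prog (enc h))))
                                      (const_prog (enc (CMu (CComp g CPi1)))))).
  eapply computes_ext; [prove_computes | reflexivity].
Qed.

Definition holdsb (P : nat -> Prop) (x : nat) : bool :=
  if excluded_middle_informative (P x) then true else false.

Lemma holdsb_spec P x : holdsb P x = true <-> P x.
Proof. unfold holdsb. destruct excluded_middle_informative; intuition discriminate. Qed.

Definition elements_below (P : nat -> Prop) (n : nat) : list nat := filter (holdsb P) (seq 0 n).

Definition rank (P : nat -> Prop) (n : nat) : nat := length (elements_below P n).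

Lemma In_elements_below P n x : In x (elements_below P n) <-> x < n /\ P x.
Proof. unfold elements_below. rewrite filter_In, in_seq, holdsb_spec. intuition lia. Qed.

Lemma rank_S P n : rank P (S n) = rank P n + (if holdsb P n then 1 else 0).
Proof.
  unfold rank, elements_below. rewrite seq_S, filter_app, length_app. simpl.
  now destruct (holdsb P n).
Qed.

Lemma rank_S_in P n : P n -> rank P (S n) = S (rank P n).
Proof. intros Pn%holdsb_spec. rewrite rank_S, Pn. lia. Qed.

Lemma rank_le P a b : a <= b -> rank P a <= rank P b.
Proof. induction 1; [lia | rewrite rank_S; lia]. Qed.

Lemma rank_inj P a b : P a -> P b -> rank P a = rank P b -> a = b.
Proof.
  intros Pa Pb E.
  destruct (Nat.lt_trichotomy a b) as [lt | [eq | gt]]; trivial; exfalso.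
  - pose proof (rank_le P _ _ lt). rewrite rank_S_in in * by assumption. lia.
  - pose proof (rank_le P _ _ gt). rewrite rank_S_in in * by assumption. lia.
Qed.

Lemma rank_ext P Q n : (forall x, P x <-> Q x) -> rank P n = rank Q n.
Proof.
  intro PQ. unfold rank, elements_below. f_equal. apply filter_ext. intro x.
  apply eq_true_iff_eq. rewrite !holdsb_spec. apply PQ.
Qed.

Lemma rank_attained P N r : r < rank P N -> exists y, P y /\ rank P y = r.
Proof.
  induction N as [|N IHN]; [cbn; lia|]. rewrite rank_S.
  destruct (holdsb P N) eqn:PN; intro lt; [|apply IHN; lia].
  destruct (Nat.eq_dec r (rank P N)) as [-> | ne]; [|apply IHN; lia].
  exists N. now split; [apply holdsb_spec|].
Qed.

Definition injective_below (f : nat -> nat) (n : nat) : Prop :=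
  forall a b, a < n -> b < n -> f a = f b -> a = b.

Definition at_least (P : nat -> Prop) (n : nat) : Prop :=
  exists f, (forall t, t < n -> P (f t)) /\ injective_below f n.

Lemma at_least_0 P : at_least P 0.
Proof. exists (fun t => t). split; [intros t lt | intros a b lt]; inversion lt. Qed.

Lemma at_least_injective P (f : nat -> nat) n :
  (forall t, P (f t)) -> (forall a b, f a = f b -> a = b) -> at_least P n.
Proof. intros Pf f_inj. exists f. split; [intros t _ | intros a b _ _]; auto. Qed.

Lemma bounded_below (f : nat -> nat) n : exists b, forall t, t < n -> f t < b.
Proof.
  induction n as [|n [b Hb]]; [exists 0; lia|].
  exists (max b (S (f n))). intros t lt.
  destruct (Nat.eq_dec t n) as [-> | ne]; [lia|]. specialize (Hb t). lia.
Qed.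

Lemma at_least_rank P r : at_least P (S r) -> exists y, P y /\ rank P y = r.
Proof.
  intros (f & Pf & f_inj). destruct (bounded_below f (S r)) as [b Hb].
  apply (rank_attained P b).
  enough (length (map f (seq 0 (S r))) <= rank P b) by (rewrite length_map, length_seq in *; lia).
  apply NoDup_incl_length.
  - apply NoDup_map_NoDup_ForallPairs; [| apply seq_NoDup].
    intros a a' Ha Ha'. rewrite in_seq in Ha, Ha'. apply f_inj; lia.
  - intros x (t & <- & Ht)%in_map_iff. rewrite in_seq in Ht.
    apply In_elements_below. split; [apply Hb | apply Pf]; lia.
Qed.

Lemma rank_at_least P y : P y -> at_least P (S (rank P y)).
Proof.
  intro Py. pose proof (rank_S_in P y Py) as Hl. unfold rank at 1 in Hl.
  exists (fun t => nth t (elements_below P (S y)) 0). split.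
  - intros t lt. apply (In_elements_below P (S y)), nth_In. lia.
  - intros a b Ha Hb. apply NoDup_nth; [apply NoDup_filter, seq_NoDup | lia | lia].
Qed.

Section EqualMultiplicities.

Context {X : Type} (R : X -> X -> Prop) {R_equiv : Equivalence R}.

Definition copies (a : nat -> X) (A : X) (x : nat) : Prop := R (a x) A.

Lemma rank_copies_proper a A B n : R A B -> rank (copies a A) n = rank (copies a B) n.
Proof. intro AB. apply rank_ext. intro x. unfold copies. now rewrite AB. Qed.

Variables a b : nat -> X.

Hypothesis equal_multiplicities :
  forall A n, at_least (copies a A) n <-> at_least (copies b A) n.

Lemma copy_of_same_rank x :
  exists y, R (a x) (b y) /\ rank (copies b (a x)) y = rank (copies a (a x)) x.
Proof.
  destruct (at_least_rank (copies b (a x)) (rank (copies a (a x)) x)) as (y & Hy & E).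
  { apply equal_multiplicities, rank_at_least. unfold copies. reflexivity. }
  exists y. split; [now symmetry | exact E].
Qed.

Lemma permutation_of_equal_multiplicities :
  exists p, is_permutation p /\ forall x, R (a x) (b (p x)).
Proof.
  destruct (choice _ copy_of_same_rank) as [p Hp].
  exists p. split; [split|]; [| | intro x; apply Hp].
  - intros x1 x2 E.
    destruct (Hp x1) as [R1 E1], (Hp x2) as [R2 E2]. rewrite E in R1, E1.
    assert (R12 : R (a x1) (a x2)) by (rewrite R1; now symmetry).
    apply (rank_inj (copies a (a x1)));
      [unfold copies; reflexivity | unfold copies; now symmetry |].
    rewrite <- E1, (rank_copies_proper b _ _ _ R12), E2.
    now apply rank_copies_proper.
  - intro y. set (A := b y).
    assert (Hy : copies b A y) by (unfold copies; reflexivity).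
    destruct (at_least_rank (copies a A) (rank (copies b A) y)) as (x & Hx & E).
    { now apply equal_multiplicities, rank_at_least. }
    exists x. destruct (Hp x) as [Rx Ex].
    apply (rank_inj (copies b A)); [unfold copies; now rewrite <- Rx | exact Hy |].
    rewrite <- (rank_copies_proper b _ _ _ Hx), Ex, (rank_copies_proper a _ _ _ Hx).
    exact E.
Qed.

End EqualMultiplicities.

#[local] Instance set_eq_equivalence : Equivalence set_eq.
Proof. split; intros A *; unfold set_eq; firstorder. Qed.

Definition set_to_perm : nat -> nat := guarded_index (CPair CPi1 (CComp CPi1 CPi2)) CZero.

Lemma set_to_perm_computable : computable set_to_perm.
Proof. apply guarded_index_computable. Qed.

Lemma column_set_to_perm i M :
  set_eq (column (W (set_to_perm i)) M) (column (W i) (unpair1 M)).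
Proof.
  intro x. unfold column, set_to_perm.
  rewrite W_guarded_index with (H := fun z => pair (unpair1 z) (unpair1 (unpair2 z)))
                               (G := fun _ => 0) by prove_computes.
  unpair_simpl. tauto.
Qed.

Lemma set_to_perm_multiplicity i j A n :
  (forall n, exists m, set_eq (column (W i) n) (column (W j) m)) ->
  at_least (copies set_eq (column (W (set_to_perm i))) A) n ->
  at_least (copies set_eq (column (W (set_to_perm j))) A) n.
Proof.
  intro ij. destruct n as [|n]; [intros; apply at_least_0|].
  intros (f & Hf & _). destruct (ij (unpair1 (f 0))) as [m Hm].
  apply at_least_injective with (f := pair m); [| now intros a b [_ ->]%pair_inj].
  intro t. unfold copies. rewrite column_set_to_perm, unpair1_pair, <- Hm, <- column_set_to_perm.
  apply Hf. lia.
Qed.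

Lemma Eset_sym i j : Eset i j -> Eset j i.
Proof.
  intros [ij ji]. split; intro n; [destruct (ji n) | destruct (ij n)]; eexists; symmetry; eauto.
Qed.

Lemma Eset_iff_Eperm_set_to_perm i j : Eset i j <-> Eperm (set_to_perm i) (set_to_perm j).
Proof.
  split.
  - intro ij. apply (permutation_of_equal_multiplicities set_eq). intros A n.
    split; apply set_to_perm_multiplicity; [apply ij | apply (Eset_sym _ _ ij)].
  - intros (p & [_ p_surj] & Hp). split.
    + intro n. exists (unpair1 (p (pair n 0))).
      rewrite <- column_set_to_perm, <- Hp, column_set_to_perm, unpair1_pair. reflexivity.
    + intro m. destruct (p_surj (pair m 0)) as [M HM]. exists (unpair1 M).
      rewrite <- column_set_to_perm, Hp, HM, column_set_to_perm, unpair1_pair. reflexivity.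
Qed.

Section PermToSet.

(* An input z = <<<s, u>, y>, <k, <m, q>>> asks whether <<s, u>, y> lies in column
   <k, <m, q>>. *)
Let s_of z := unpair1 (unpair1 (unpair1 z)).
Let u_of z := unpair2 (unpair1 (unpair1 z)).
Let y_of z := unpair2 (unpair1 z).
Let k_of z := unpair1 (unpair2 z).
Let m_of z := unpair1 (unpair2 (unpair2 z)).
Let q_of z := unpair2 (unpair2 (unpair2 z)).

Let s_prog := CComp CPi1 (CComp CPi1 CPi1).
Let u_prog := CComp CPi2 (CComp CPi1 CPi1).
Let y_prog := CComp CPi2 CPi1.
Let k_prog := CComp CPi1 CPi2.
Let m_prog := CComp CPi1 (CComp CPi2 CPi2).
Let q_prog := CComp CPi2 (CComp CPi2 CPi2).

(* Vanishes iff s, u < k and (s = u or m_s <> m_u). *)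
Definition perm_to_set_guard (s u k m : nat) : nat :=
  (S s - k) + (S u - k) + ((1 - dist (code_nth m s) (code_nth m u)) - (1 - dist s u)).

Definition perm_to_set_target (s u y m q : nat) : nat :=
  pair y (match dist s u with 0 => code_nth m s | S _ => q end).

Let guard_prog :=
  bin add_prog
    (bin add_prog (bin sub_prog (CComp CSucc s_prog) k_prog)
                  (bin sub_prog (CComp CSucc u_prog) k_prog))
    (bin sub_prog
       (bin sub_prog (const_prog 1)
          (dist_prog (bin code_nth_prog m_prog s_prog) (bin code_nth_prog m_prog u_prog)))
       (bin sub_prog (const_prog 1) (dist_prog s_prog u_prog))).

Let target_prog :=
  CPair y_prog (ifz (dist_prog s_prog u_prog) (bin code_nth_prog m_prog s_prog) q_prog).

Lemma computes_perm_to_set_guard :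
  computes guard_prog (fun z => perm_to_set_guard (s_of z) (u_of z) (k_of z) (m_of z)).
Proof. eapply computes_ext; [unfold guard_prog; prove_computes | reflexivity]. Qed.

Lemma computes_perm_to_set_target :
  computes target_prog (fun z => perm_to_set_target (s_of z) (u_of z) (y_of z) (m_of z) (q_of z)).
Proof. eapply computes_ext; [unfold target_prog; prove_computes | reflexivity]. Qed.

Definition perm_to_set : nat -> nat := guarded_index target_prog guard_prog.

Lemma perm_to_set_computable : computable perm_to_set.
Proof. apply guarded_index_computable. Qed.

Lemma column_perm_to_set i k m q s u y :
  column (W (perm_to_set i)) (pair k (pair m q)) (pair (pair s u) y) <->
  (s < k /\ u < k /\ (s = u \/ code_nth m s <> code_nth m u)) /\
  W i (pair y (if s =? u then code_nth m s else q)).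
Proof.
  unfold column, perm_to_set.
  rewrite (W_guarded_index _ _ _ _ _ _ computes_perm_to_set_target computes_perm_to_set_guard).
  unfold s_of, u_of, y_of, k_of, m_of, q_of, perm_to_set_guard, perm_to_set_target.
  unpair_simpl. unfold dist. destruct (Nat.eqb_spec s u) as [<- | ne].
  - rewrite !Nat.sub_diag. cbn iota. intuition lia.
  - replace (s - u + (u - s)) with (S (s - u + (u - s) - 1)) by lia.
    destruct (Nat.eq_dec (code_nth m s) (code_nth m u)) as [e | e]; [rewrite e, !Nat.sub_diag |];
      intuition lia.
Qed.

End PermToSet.

Lemma perm_to_set_column_image i j p :
  (forall a b, p a = p b -> a = b) ->
  (forall n, set_eq (column (W i) n) (column (W j) (p n))) ->
  forall M, exists M', set_eq (column (W (perm_to_set i)) M) (column (W (perm_to_set j)) M').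
Proof.
  intros p_inj Hp M.
  destruct (pair_surj M) as (k & M1 & ->), (pair_surj M1) as (m & q & ->).
  destruct (code_nth_exists k (fun t => p (code_nth m t))) as [m' Hm'].
  exists (pair k (pair m' (p q))). intro e.
  destruct (pair_surj e) as (su & y & ->), (pair_surj su) as (s & u & ->).
  rewrite !column_perm_to_set.
  destruct (classic (s < k /\ u < k)) as [[hs hu] | out]; [| tauto].
  rewrite (Hm' s hs), (Hm' u hu).
  assert (code_nth m s <> code_nth m u <-> p (code_nth m s) <> p (code_nth m u))
    by (split; intros ne E; apply ne; [apply p_inj, E | congruence]).
  assert (W i (pair y (if s =? u then code_nth m s else q)) <->
          W j (pair y (if s =? u then p (code_nth m s) else p q)))
    by (destruct (s =? u); apply Hp).
  tauto.
Qed.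

Lemma Eperm_perm_to_set i j : Eperm i j -> Eset (perm_to_set i) (perm_to_set j).
Proof.
  intros (p & [p_inj p_surj] & Hp).
  destruct (choice _ p_surj) as [p' Hp'].
  split.
  - apply (perm_to_set_column_image i j p p_inj Hp).
  - intro M. destruct (perm_to_set_column_image j i p') with (M := M) as [M' HM'].
    + intros a b E. now rewrite <- (Hp' a), <- (Hp' b), E.
    + intro n. now rewrite Hp, Hp'.
    + exists M'. now symmetry.
Qed.

Lemma perm_to_set_multiplicity_nonempty i j A n y0 q :
  (forall M, exists M', set_eq (column (W (perm_to_set i)) M) (column (W (perm_to_set j)) M')) ->
  W i (pair y0 q) ->
  at_least (copies set_eq (column (W i)) A) n ->
  at_least (copies set_eq (column (W j)) A) n.
Proof.
  intros ij Hq (f & Hf & f_inj).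
  destruct (bounded_below f n) as [b Hb].
  (* The extra entry b differs from all f t, so the marker at <t, n> forces t < k' even
     when A is empty and n = 1. *)
  set (F := fun t => if t <? n then f t else b).
  assert (F_inj : injective_below F (S n)).
  { intros s u hs hu. unfold F.
    destruct (Nat.ltb_spec s n), (Nat.ltb_spec u n); intro E; [apply f_inj | ..]; try lia.
    - specialize (Hb s). lia.
    - specialize (Hb u). lia. }
  destruct (code_nth_exists (S n) F) as [m Hm].
  destruct (ij (pair (S n) (pair m q))) as [M' HM'].
  destruct (pair_surj M') as (k' & M1 & ->), (pair_surj M1) as (m' & q' & ->).
  assert (distinct : forall s u, s <= n -> u <= n -> s <> u ->
                       s < k' /\ code_nth m' s <> code_nth m' u).
  { intros s u hs hu ne.
    assert (Hsu : column (W (perm_to_set i)) (pair (S n) (pair m q)) (pair (pair s u) y0)).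
    { rewrite column_perm_to_set, Hm, Hm, (proj2 (Nat.eqb_neq s u) ne) by lia.
      split; [| exact Hq]. repeat split; try lia. right. intro E. apply ne, F_inj; lia || exact E. }
    apply HM' in Hsu. rewrite column_perm_to_set in Hsu.
    destruct Hsu as [(hs' & _ & [? | ?]) _]; tauto. }
  exists (code_nth m'). split.
  - intros t lt y. rewrite <- (Hf t lt y).
    specialize (HM' (pair (pair t t) y)).
    rewrite !column_perm_to_set, Nat.eqb_refl, Hm in HM' by lia.
    unfold F in HM'. rewrite (proj2 (Nat.ltb_lt t n) lt) in HM'.
    destruct (distinct t n ltac:(lia) ltac:(lia) ltac:(lia)) as [tk' _].
    unfold column. split; intro Hy;
      [refine (proj2 (proj2 HM' _)) | refine (proj2 (proj1 HM' _))];
      (split; [repeat split; auto; lia | exact Hy]).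
  - intros s u hs hu E. destruct (Nat.eq_dec s u) as [| ne]; [assumption |].
    exfalso. apply (distinct s u); lia || assumption.
Qed.

Lemma perm_to_set_empty i j :
  (forall M', exists M, set_eq (column (W (perm_to_set i)) M) (column (W (perm_to_set j)) M')) ->
  (forall y q, ~ W i (pair y q)) -> forall y q, ~ W j (pair y q).
Proof.
  intros ji i_empty y q Wj.
  destruct (code_nth_exists 1 (fun _ => q)) as [m Hm].
  destruct (ji (pair 1 (pair m 0))) as [M HM].
  destruct (pair_surj M) as (k & M1 & ->), (pair_surj M1) as (m' & q' & ->).
  assert (Hy : column (W (perm_to_set j)) (pair 1 (pair m 0)) (pair (pair 0 0) y)).
  { rewrite column_perm_to_set, Nat.eqb_refl, Hm by lia. split; [lia | exact Wj]. }
  apply HM, column_perm_to_set in Hy as [_ Wi]. eapply i_empty, Wi.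
Qed.

Lemma perm_to_set_multiplicity i j A n :
  Eset (perm_to_set i) (perm_to_set j) ->
  at_least (copies set_eq (column (W i)) A) n -> at_least (copies set_eq (column (W j)) A) n.
Proof.
  intros [ij ji] Hi.
  destruct (classic (exists y q, W i (pair y q))) as [(y & q & Hq) | i_empty].
  - eapply perm_to_set_multiplicity_nonempty; eassumption.
  - destruct n as [|n]; [apply at_least_0 |].
    destruct Hi as (f & Hf & _).
    apply at_least_injective with (f := fun t => t); [| auto].
    intros x y. rewrite <- (Hf 0 ltac:(lia) y). unfold column.
    split; intro Hy; exfalso; [eapply perm_to_set_empty | apply i_empty]; eauto.
Qed.

Lemma Eperm_iff_Eset_perm_to_set i j : Eperm i j <-> Eset (perm_to_set i) (perm_to_set j).
Proof.
  split; [apply Eperm_perm_to_set |].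
  intro ij. apply (permutation_of_equal_multiplicities set_eq). intros A n.
  split; apply perm_to_set_multiplicity; [exact ij | now apply Eset_sym].
Qed.

Theorem theorem2p3 : creducible Eperm Eset /\ creducible Eset Eperm.
Proof.
  split.
  - exists perm_to_set. split; [apply perm_to_set_computable | apply Eperm_iff_Eset_perm_to_set].
  - exists set_to_perm. split; [apply set_to_perm_computable | apply Eset_iff_Eperm_set_to_perm].
Qed.
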